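(* Let $T$ be a trace (well formed, with a matching release for each acquire) and let $<$ be a strict partial order on $\mathrm{evts}(T)$ satisfying the MHB-Criteria. Then $\mathrm{LH}_{<}(e)\subseteq \mathrm{LH}_T(e)$ for all $e\in T$.
   Context: Events and traces. An event is a triple $e=(\alpha,t,op)$ with a unique identifier $\alpha$, a thread id $t$ and an operation $op$, which is one of $\mathit{rd}(x)$, $\mathit{wr}(x)$ (read/write of a shared variable $x$) or $\mathit{req}(l)$, $\mathit{acq}(l)$, $\mathit{rel}(l)$ (request, acquire, release of a lock $l$). Write $\mathrm{thd}(e)=t$. A trace is a finite list of events with distinct identifiers; $e\in T$ means $e$ occurs in $T$, $\mathrm{evts}(T)$ is its set of events, and $e<_T f$ means $e$ occurs at an earlier position than $f$ in $T$. Well formedness. $T$ is well formed if: (WF-Acq) for all $a=(t,\mathit{acq}(l))$, $a'=(t',\mathit{acq}(l))$ in $T$ with $a<_T a'$ there is $r=(t,\mathit{rel}(l))\in T$ with $a<_T r<_T a'$; (WF-Rel) for every $r=(t,\mathit{rel}(l))\in T$ there is $a=(t,\mathit{acq}(l))\in T$ with $a<_T r$ and no $r'=(t',\mathit{rel}(l))\in T$ with $a<_T r'<_T r$; (WF-Req) for every $a=(t,\mathit{acq}(l))\in T$ there is $q=(t,\mathit{req}(l))\in T$ with $q<_T a$ and no event of thread $t$ strictly between $q$ and $a$, and for every $q=(t,\mathit{req}(l))\in T$, the event of thread $t$ immediately following $q$ in $T$ (if any) is of the form $(t,\mathit{acq}(l))$. Standing assumption: $T$ is well formed and every acquire has a matching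 release in $T$. Correct reorderings. For a read $e=(\cdot,\mathit{rd}(x))\in T$, $\mathrm{lw}_T(e)$ is the write $f=(\cdot,\mathit{wr}(x))$ with $f<_T e$ and no write on $x$ strictly between them in $T$. A trace $T'$ is a correctly reordered prefix of $T$ if (CRP-WF) $T'$ is well formed and $\mathrm{evts}(T')\subseteq\mathrm{evts}(T)$; (CRP-PO) for every thread $t$ of $T'$, the subsequence of thread-$t$ events of $T'$ is a prefix of that of $T$; (CRP-LW) for every read $e\in T'$ with $f=\mathrm{lw}_T(e)$ we have $f=\mathrm{lw}_{T'}(e)$. $\mathrm{crp}(T)$ is the set of correctly reordered prefixes of $T$. Trace-based lock sets. Write $e\prec_T f$ if for every $T'\in\mathrm{crp}(T)$ with $f\in T'$ we have $e\in T'$ and $e<_{T'}f$. For $a=(t,\mathit{acq}(l))$, $r=(t,\mathit{rel}(l))\in T$, $e\in\mathrm{CS}_T(a,r)$ iff (CS-Enclosed) $a\prec_T e$ and $e\prec_T r$, and (CS-Match) there is no release $r'=(t,\mathit{rel}(l))\in T$ and $T'\in\mathrm{crp}(T)$ with $a<_{T'}r'<_{T'}e$. $\mathrm{LH}_T(e)=\{(l,t)\mid \exists a,r\in T,\ a=(t,\mathit{acq}(l)),\ e\in\mathrm{CS}_T(a,r)\}$. Partial-order lock sets. For a strict partial order $<$ on $\mathrm{evts}(T)$ and $a=(t,\mathit{acq}(l))$, $r=(t,\mathit{rel}(l))\in T$: $e\in\mathrm{CS}_{<}(a,r)$ iff (PO-CS-Enclosed) $a<e$ and $e<r$, and (PO-CS-Match)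 there is no release $r'=(t,\mathit{rel}(l))\in T$ and $T'\in\mathrm{crp}(T)$ with $a<_{T'}r'<_{T'}e$. $\mathrm{LH}_{<}(e)=\{(l,t)\mid \exists a,r\in T,\ a=(t,\mathit{acq}(l)),\ e\in\mathrm{CS}_{<}(a,r)\}$. The order $<$ satisfies the MHB-Criteria if whenever $e<f$, for every $T'\in\mathrm{crp}(T)$ with $f\in T'$ we have $e\in T'$ and $e<_{T'}f$. *)

From Stdlib Require Import List Arith.
Import ListNotations.

(* Shared variables, locks, thread ids and event identifiers are naturals. *)
Inductive Op : Type :=
| Rd  (x : nat)
| Wr  (x : nat)
| Req (l : nat)
| Acq (l : nat)
| Rel (l : nat).

Record Event : Type := mkEvent { eid : nat; thd : nat; op : Op }.

Definition Trace := list Event.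

Definition is_trace (T : Trace) : Prop := NoDup (map eid T).

Definition before (T : Trace) (e f : Event) : Prop :=
  exists i j, i < j /\ nth_error T i = Some e /\ nth_error T j = Some f.

Definition WF_Acq (T : Trace) : Prop :=
  forall a a' l, In a T -> In a' T -> op a = Acq l -> op a' = Acq l ->
    before T a a' ->
    exists r, In r T /\ thd r = thd a /\ op r = Rel l /\
              before T a r /\ before T r a'.

Definition WF_Rel (T : Trace) : Prop :=
  forall r l, In r T -> op r = Rel l ->
    exists a, In a T /\ thd a = thd r /\ op a = Acq l /\ before T a r /\
      ~ (exists r', In r' T /\ op r' = Rel l /\ before T a r' /\ before T r' r).

Definition WF_Req (T : Trace) : Prop :=
  (forall a l, In a T -> op a = Acq l ->
    exists q, In q T /\ thd q = thd a /\ op q = Req l /\ before T q a /\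
      ~ (exists g, In g T /\ thd g = thd a /\ before T q g /\ before T g a))
  /\
  (forall q l g, In q T -> op q = Req l -> In g T -> thd g = thd q ->
    before T q g ->
    ~ (exists h, In h T /\ thd h = thd q /\ before T q h /\ before T h g) ->
    op g = Acq l).

Definition well_formed (T : Trace) : Prop :=
  WF_Acq T /\ WF_Rel T /\ WF_Req T.

Definition acq_matched (T : Trace) : Prop :=
  forall a l, In a T -> op a = Acq l ->
    exists r, In r T /\ thd r = thd a /\ op r = Rel l /\ before T a r /\
      ~ (exists r', In r' T /\ op r' = Rel l /\ before T a r' /\ before T r' r).

Definition is_lw (T : Trace) (e f : Event) : Prop :=
  exists x, op e = Rd x /\ op f = Wr x /\ In f T /\ before T f e /\
    ~ (exists g, In g T /\ op g = Wr x /\ before T f g /\ before T g e).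

Definition is_read (e : Event) : Prop := exists x, op e = Rd x.

Definition thread_proj (t : nat) (T : Trace) : Trace :=
  filter (fun e => Nat.eqb (thd e) t) T.

Definition is_prefix (s1 s2 : Trace) : Prop := exists s, s1 ++ s = s2.

(* T' is a correctly reordered prefix of T *)
Definition crp (T T' : Trace) : Prop :=
  is_trace T' /\ well_formed T' /\ (forall e, In e T' -> In e T) /\
  (forall t, is_prefix (thread_proj t T') (thread_proj t T)) /\
  (* CRP-LW : lw_T(e) and lw_T'(e) coincide (as partial functions) *)
  (forall e, In e T' -> is_read e ->
     forall f, is_lw T e f <-> is_lw T' e f).

Definition prec (T : Trace) (e f : Event) : Prop :=
  forall T', crp T T' -> In f T' -> In e T' /\ before T' e f.

Definition cs_match (T : Trace) (a e : Event) (l : nat) : Prop :=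
  ~ (exists r' T', In r' T /\ thd r' = thd a /\ op r' = Rel l /\
        crp T T' /\ before T' a r' /\ before T' r' e).

Definition CS_T (T : Trace) (a r : Event) (l : nat) (e : Event) : Prop :=
  prec T a e /\ prec T e r /\ cs_match T a e l.

Definition LH_T (T : Trace) (e : Event) (l t : nat) : Prop :=
  exists a r, In a T /\ In r T /\ thd a = t /\ op a = Acq l /\
    thd r = t /\ op r = Rel l /\ CS_T T a r l e.

Definition CS_po (T : Trace) (lt : Event -> Event -> Prop)
  (a r : Event) (l : nat) (e : Event) : Prop :=
  lt a e /\ lt e r /\ cs_match T a e l.

Definition LH_po (T : Trace) (lt : Event -> Event -> Prop)
  (e : Event) (l t : nat) : Prop :=
  exists a r, In a T /\ In r T /\ thd a = t /\ op a = Acq l /\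
    thd r = t /\ op r = Rel l /\ CS_po T lt a r l e.

Definition strict_po_on (T : Trace) (lt : Event -> Event -> Prop) : Prop :=
  (forall e f, lt e f -> In e T /\ In f T) /\
  (forall e, ~ lt e e) /\
  (forall e f g, lt e f -> lt f g -> lt e g).

Definition MHB_criteria (T : Trace) (lt : Event -> Event -> Prop) : Prop :=
  forall e f, lt e f -> prec T e f.

From Stdlib Require Import List.

Lemma LH_T_is_LH_po_prec (T : Trace) (e : Event) (l t : nat) :
  LH_T T e l t <-> LH_po T (prec T) e l t.
Proof. reflexivity. Qed.

Lemma LH_po_monotone (T : Trace) (lt lt' : Event -> Event -> Prop) :
  (forall e f, lt e f -> lt' e f) ->
  forall e l t, LH_po T lt e l t -> LH_po T lt' e l t.
Proof.
  intros Hsub e l t (a & r & Ha & Hr & Hta & Hopa & Htr & Hopr & Hae & Her & Hmatch).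
  exists a, r; repeat split; auto.
Qed.

Theorem lemma6p5 (T : Trace) (lt : Event -> Event -> Prop) :
  is_trace T -> well_formed T -> acq_matched T ->
  strict_po_on T lt -> MHB_criteria T lt ->
  forall e, In e T -> forall l t, LH_po T lt e l t -> LH_T T e l t.
Proof.
  intros _ _ _ _ Hmhb e _ l t Hlh.
  apply LH_T_is_LH_po_prec.
  exact (LH_po_monotone T lt (prec T) Hmhb e l t Hlh).
Qed.
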